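(* Let $S_X,S_Y$ be finite nonempty action sets and $u_X,u_Y:S_X\times S_Y\to\mathbb{R}$ the stage-game payoff functions of $X$ and $Y$. There exists a zero-sum autocratic strategy for player $X$ (i.e., $u_X+u_Y\equiv0$ is enforceable) if and only if there exist $\tau_X^+,\tau_X^-\in\Delta(S_X)$ such that $u_X(\tau_X^+,s_Y)\ge-u_Y(\tau_X^+,s_Y)$ and $u_X(\tau_X^-,s_Y)\le-u_Y(\tau_X^-,s_Y)$ for all $s_Y\in S_Y$.
   Context: Two players $X,Y$ play a repeated game with finite action sets $S_X,S_Y$; $\Delta(S)$ denotes the probability distributions on $S$; functions on $S_X\times S_Y$ are extended to mixed actions in the first argument by $f(\tau_X,s_Y)=\mathbb{E}_{s_X\sim\tau_X}[f(s_X,s_Y)]$. Histories: $\mathcal{H}=\bigcup_{T\ge0}(S_X\times S_Y)^T$; behavioral strategies are maps $\sigma:\mathcal{H}\to\Delta(S)$; players independently draw actions each round from their strategies evaluated at the history of realized action pairs, with $\mathbb{E}_{\sigma_X,\sigma_Y}$ the expectation over the resulting play. For $\varphi:S_X\times S_Y\to\mathbb{R}$ and $\lambda\in[0,1)$, $\sigma_X$ is $(\varphi,\lambda)$-autocratic if for every behavioral strategy $\sigma_Y$, $\mathbb{E}_{\sigma_X,\sigma_Y}[(1-\lambda)\sum_{t\ge0}\lambda^t\varphi(s_X^t,s_Y^t)]=0$; it is $(\varphi,1)$-autocratic if for every $\sigma_Y$ the limit $\lim_{T\to\infty}\frac1{T+1}\sum_{t=0}^T\mathbb{E}_{\sigma_X,\sigma_Y}[\varphi(s_X^t,s_Y^t)]$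 exists and equals $0$. A zero-sum autocratic strategy is a behavioral strategy of $X$ that is $(u_X+u_Y,\lambda)$-autocratic for some $\lambda\in[0,1]$, i.e., enforces $\pi_X=-\pi_Y$ in expectation. *)

From mathcomp Require Import all_boot all_order all_algebra.
From mathcomp Require Import all_classical all_reals all_analysis.
Set Implicit Arguments. Unset Strict Implicit. Unset Printing Implicit Defensive.
Import Order.TTheory GRing.Theory Num.Theory.
Local Open Scope classical_set_scope.
Local Open Scope ring_scope.

Definition is_mixed {R : realType} {S : finType} (tau : S -> R) : Prop :=
  (forall s, 0 <= tau s) /\ \sum_(s : S) tau s = 1.

Definition mixed_payoff {R : realType} {SX SY : finType}
  (f : SX -> SY -> R) (tau : SX -> R) (sY : SY) : R :=
  \sum_(a : SX) tau a * f a sY.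

(* Histories: finite sequences of realized action pairs, in chronological
   order (the most recent pair is last). *)
Definition history (SX SY : finType) := seq (SX * SY).

Definition behavioral {R : realType} {SX SY S : finType}
  (sigma : history SX SY -> S -> R) : Prop :=
  forall h, is_mixed (sigma h).

(* stage_exp sX sY phi t h = expected value of phi at the round |h| + t,
   conditional on history h having been realized, when actions are drawn
   independently from sX and sY at each round. *)
Fixpoint stage_exp {R : realType} {SX SY : finType}
  (sX : history SX SY -> SX -> R) (sY : history SX SY -> SY -> R)
  (phi : SX -> SY -> R) (t : nat) (h : history SX SY) : R :=
  match t with
  | 0 => \sum_(a : SX) \sum_(b : SY) sX h a * sY h b * phi a b
  | t'.+1 => \sum_(a : SX) \sum_(b : SY)
               sX h a * sY h b * stage_exp sX sY phi t' (rcons h (a, b))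
  end.

Definition exp_stage {R : realType} {SX SY : finType}
  (sX : history SX SY -> SX -> R) (sY : history SX SY -> SY -> R)
  (phi : SX -> SY -> R) (t : nat) : R :=
  stage_exp sX sY phi t [::].

(* For lambda < 1 the expectation
   of the discounted sum is the sum of the discounted expectations (phi is
   bounded); we require the partial sums of this series to converge to 0.
   For lambda = 1 the Cesaro means of the stage expectations converge to 0. *)
Definition autocratic {R : realType} {SX SY : finType}
  (sX : history SX SY -> SX -> R) (phi : SX -> SY -> R) (lam : R) : Prop :=
  forall sY : history SX SY -> SY -> R, behavioral sY ->
    (lam < 1 ->
       (fun n : nat => \sum_(t < n) (1 - lam) * lam ^+ t * exp_stage sX sY phi t)
         @ \oo --> 0) /\
    (lam = 1 ->
       (fun T : nat => (T.+1%:R)^-1 * \sum_(t < T.+1) exp_stage sX sY phi t)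
         @ \oo --> 0).

Definition zero_sum_autocratic {R : realType} {SX SY : finType}
  (uX uY : SX -> SY -> R) (sX : history SX SY -> SX -> R) : Prop :=
  behavioral sX /\
  exists lam : R, 0 <= lam <= 1 /\ autocratic sX (fun a b => uX a b + uY a b) lam.

From mathcomp Require Import all_boot all_order all_algebra.
From mathcomp Require Import all_classical all_reals all_analysis.
From mathcomp Require Import lra.
Import Order.TTheory GRing.Theory Num.Theory numFieldNormedType.Exports.
Local Open Scope classical_set_scope.
Local Open Scope ring_scope.
Set Implicit Arguments. Unset Strict Implicit. Unset Printing Implicit Defensive.

(* If no mixed action of X made phi := u_X + u_Y nonnegative against every
   reply, compactness of the simplex would give a c > 0 such that every mixed
   action has a reply with expected phi <= -c; the myopic best reply of Y then
   keeps every stage expectation below -c, which rules out both the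
   discounted and the Cesaro form of autocracy.  Applied to -phi this yields
   tau^- as well.
   Conversely, X keeps the potential V = minus the sum of the expected stage
   values of phi so far, and plays tau^+ while V >= 0 and tau^- otherwise.
   Each step moves V towards 0, possibly past it, by at most max |phi|, so V
   stays bounded; since the expected sum of the first T stage values is
   -E[V_T], the Cesaro means vanish. *)

Section MixedAverages.
Variables (R : realType) (I : finType) (w : I -> R).
Hypothesis w_mixed : is_mixed w.

Lemma mean_const c : \sum_i w i * c = c.
Proof. by case: w_mixed => _ w1; rewrite -mulr_suml w1 mul1r. Qed.

Lemma mean_subr c (x : I -> R) : \sum_i w i * (c - x i) = c - \sum_i w i * x i.
Proof. by under eq_bigr do rewrite mulrBr; rewrite sumrB mean_const. Qed.

Lemma mean_le (x : I -> R) c : (forall i, x i <= c) -> \sum_i w i * x i <= c.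
Proof.
move=> xc; rewrite -[leRHS]mean_const; apply: ler_sum => i _.
by apply: ler_wpM2l => //; case: w_mixed.
Qed.

Lemma mean_norm_le (x : I -> R) c : (forall i, `|x i| <= c) -> `|\sum_i w i * x i| <= c.
Proof.
move=> xc; apply: le_trans (ler_norm_sum _ _ _) _.
rewrite (eq_bigr (fun i => w i * `|x i|)); first exact: mean_le.
by move=> i _; rewrite normrM ger0_norm //; case: w_mixed.
Qed.

End MixedAverages.

Lemma is_mixed_dirac (R : realType) (I : finType) (j : I) :
  is_mixed (fun i => (i == j)%:R : R).
Proof.
split=> [i|]; first exact: ler0n.
by rewrite (bigD1 j) //= eqxx big1 ?addr0 // => i /negbTE ->.
Qed.

Lemma sum_dirac (R : realType) (I : finType) (j : I) (F : I -> R) :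
  \sum_i (i == j)%:R * F i = F j.
Proof.
by rewrite (bigD1 j) //= eqxx mul1r big1 ?addr0 // => i /negbTE ->; rewrite mul0r.
Qed.

Section MixedPayoff.
Variables (R : realType) (SX SY : finType).

Lemma mixed_payoffD (f g : SX -> SY -> R) tau b :
  mixed_payoff (fun a b => f a b + g a b) tau b = mixed_payoff f tau b + mixed_payoff g tau b.
Proof. by rewrite /mixed_payoff -big_split; apply: eq_bigr => a _; rewrite mulrDr. Qed.

Lemma mixed_payoffN (f : SX -> SY -> R) tau b :
  mixed_payoff (fun a b => - f a b) tau b = - mixed_payoff f tau b.
Proof. by rewrite /mixed_payoff -sumrN; apply: eq_bigr => a _; rewrite mulrN. Qed.

Lemma continuous_mixed_payoff (f : SX -> SY -> R) b :
  continuous (fun tau : {ptws SX -> R^o} => mixed_payoff f tau b : R^o).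
Proof.
rewrite /mixed_payoff; apply: (continuous_big add_continuous) => a _ tau.
apply: (continuousM (s := fun tau : {ptws SX -> R^o} => tau a : R^o)).
  exact: (@proj_continuous SX (fun _ => R^o) a).
exact: (@cst_continuous {ptws SX -> R^o} R^o (f a b) tau).
Qed.

Lemma mixed_compact : compact [set tau : {ptws SX -> R^o} | is_mixed tau].
Proof.
have -> : [set tau : {ptws SX -> R^o} | is_mixed tau] =
  [set tau | forall a, [set` `[0, 1]] (tau a)] `&`
  (fun tau : {ptws SX -> R^o} => \sum_a tau a : R^o) @^-1` [set 1].
  apply/seteqP; split=> tau /=.
    move=> [t0 t1]; split=> //= a; rewrite in_itv /= t0 /= -t1.
    by rewrite (bigD1 a) //= lerDl sumr_ge0.
  by move=> [t01 t1]; split=> // a; have /andP[] := t01 a.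
apply: compact_closedI.
  exact: (@tychonoff SX (fun _ => R^o) _ (fun _ => @segment_compact R 0 1)).
apply: closed_comp; last exact: closed_eq.
move=> tau _; apply: (continuous_big add_continuous) => a _.
exact: (@proj_continuous SX (fun _ => R^o) a).
Qed.

Lemma mixed_payoff_uniformly_neg (f : SX -> SY -> R) :
  (forall tau, is_mixed tau -> exists b, mixed_payoff f tau b < 0) ->
  exists2 c : R, 0 < c &
    forall tau, is_mixed tau -> exists b, mixed_payoff f tau b <= - c.
Proof.
move=> neg.
have [[tau0 mixed0]|no_mixed] := pselect (exists tau : SX -> R, is_mixed tau); last first.
  by exists 1 => // tau mixed; case: no_mixed; exists tau.
pose worst (tau : {ptws SX -> R^o}) : R^o := \big[Order.min/0]_b mixed_payoff f tau b.
have worst_cont : continuous worst.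
  have min_cont : continuous (fun xy : R^o * R^o => Order.min xy.1 xy.2 : R^o).
    by move=> xy; exact: (continuous_min (f := fst) (g := snd) cvg_fst cvg_snd).
  by apply: (continuous_big min_cont) => b _; exact: continuous_mixed_payoff.
have [tau1 /set_mem mixed1 worst_max] := compact_EVT_max
  (ex_intro _ tau0 mixed0 : [set tau : {ptws SX -> R^o} | is_mixed tau] !=set0)
  mixed_compact (continuous_subspaceT worst_cont).
have [b1 neg1] := neg _ mixed1.
have worst1_neg : worst tau1 < 0 := le_lt_trans (bigmin_le _ b1 _) neg1.
exists (- worst tau1) => [|tau mixed]; first by rewrite oppr_gt0.
apply: contrapT => /forallNP no_b.
have := worst_max tau (mem_set mixed); apply/negP; rewrite -ltNge.
apply/bigmin_gtP; split => // b _.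
by rewrite ltNge; apply/negP; rewrite -[worst tau1]opprK; exact: no_b.
Qed.

End MixedPayoff.

Section Limits.
Variable R : realType.

Lemma discounted_sum_lim_le (E : nat -> R) (lam c l : R) :
  0 <= lam < 1 -> (forall t, E t <= - c) -> 0 <= c ->
  (fun n : nat => \sum_(t < n) (1 - lam) * lam ^+ t * E t) @ \oo --> l ->
  l <= - ((1 - lam) * c).
Proof.
move=> /andP[lam_ge0 lam_lt1] Ec c_ge0 cvg_l; apply: (cvgr_to_le cvg_l).
exists 1%N => // [[|n]] //= _; rewrite big_ord_recl expr0 mulr1.
have first_term : (1 - lam) * E 0 <= - ((1 - lam) * c).
  by rewrite -mulrN; apply: ler_wpM2l => //; rewrite subr_ge0 ltW.
have later_terms : \sum_(i < n) (1 - lam) * lam ^+ i.+1 * E i.+1 <= 0.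
  apply: sumr_le0 => i _; apply: mulr_ge0_le0.
    by rewrite mulr_ge0 ?exprn_ge0 // subr_ge0 ltW.
  by rewrite (le_trans (Ec _)) // oppr_le0.
by rewrite -[leRHS]addr0; apply: lerD.
Qed.

Lemma cesaro_lim_le (E : nat -> R) (c l : R) :
  (forall t, E t <= c) ->
  (fun T : nat => T.+1%:R^-1 * \sum_(t < T.+1) E t) @ \oo --> l -> l <= c.
Proof.
move=> Ec cvg_l; apply: (cvgr_to_le cvg_l); exists 0%N => // T _ /=.
rewrite mulrC ler_pdivrMr ?ltr0n // mulr_natr.
have -> : c *+ T.+1 = \sum_(t < T.+1) c by rewrite sumr_const card_ord.
by apply: ler_sum => t _.
Qed.

Lemma cesaro_cvg0_bounded (w : nat -> R) M :
  (forall T, `|w T| <= M) -> (fun T : nat => T.+1%:R^-1 * w T) @ \oo --> 0.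
Proof.
move=> wM; apply: norm_cvg0.
apply: (@squeeze_cvgr _ _ _ _ (fun=> 0) (fun T => M * T.+1%:R^-1)).
- by near=> T; rewrite normr_ge0 normrM normfV normr_nat mulrC ler_wpM2r.
- exact: cvg_cst.
- by rewrite -(mulr0 M); apply: cvgMr; exact: cvg_harmonic.
Unshelve. all: end_near. Qed.

End Limits.

Section Play.
Variables (R : realType) (SX SY : finType).
Variables (sX : history SX SY -> SX -> R) (sY : history SX SY -> SY -> R).

Definition exp_next (f : history SX SY -> R) (h : history SX SY) : R :=
  \sum_a \sum_b sX h a * sY h b * f (rcons h (a, b)).

Lemma stage_expN (phi : SX -> SY -> R) t h :
  stage_exp sX sY (fun a b => - phi a b) t h = - stage_exp sX sY phi t h.
Proof.
elim: t h => [|t IH] h /=; rewrite -sumrN; apply: eq_bigr => a _;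
  rewrite -sumrN; apply: eq_bigr => b _; by rewrite ?IH mulrN.
Qed.

Lemma stage_exp0E phi h :
  stage_exp sX sY phi 0 h = \sum_b sY h b * mixed_payoff phi (sX h) b.
Proof.
rewrite /= exchange_big; apply: eq_bigr => b _.
by rewrite /mixed_payoff mulr_sumr; apply: eq_bigr => a _; rewrite mulrCA mulrA.
Qed.

Lemma sum_stage_exp_potential phi (V : history SX SY -> R) :
  (forall h, exp_next V h = V h - stage_exp sX sY phi 0 h) ->
  forall n h, \sum_(t < n) stage_exp sX sY phi t h = V h - iter n exp_next V h.
Proof.
move=> drift; elim=> [|n IH] h; first by rewrite big_ord0 subrr.
have shift : \sum_(t < n) stage_exp sX sY phi t.+1 h =
             exp_next V h - exp_next (iter n exp_next V) h.
  rewrite /exp_next -sumrB exchange_big; apply: eq_bigr => a _.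
  rewrite -sumrB exchange_big; apply: eq_bigr => b _.
  by rewrite -mulrBr -IH mulr_sumr.
by rewrite big_ord_recl shift drift iterS; lra.
Qed.

Lemma exp_nextE f h :
  exp_next f h = \sum_a sX h a * \sum_b sY h b * f (rcons h (a, b)).
Proof.
by apply: eq_bigr => a _; rewrite mulr_sumr; apply: eq_bigr => b _; rewrite mulrA.
Qed.

Hypotheses (sX_behavioral : behavioral sX) (sY_behavioral : behavioral sY).

Lemma exp_next_le f c : (forall h, f h <= c) -> forall h, exp_next f h <= c.
Proof.
move=> fc h; rewrite exp_nextE.
by apply: mean_le => // a; apply: mean_le.
Qed.

Lemma exp_next_norm_le f c :
  (forall h, `|f h| <= c) -> forall h, `|exp_next f h| <= c.
Proof.
move=> fc h; rewrite exp_nextE.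
apply: mean_norm_le => // a; exact: mean_norm_le.
Qed.

Lemma iter_exp_next_norm_le f c n :
  (forall h, `|f h| <= c) -> forall h, `|iter n exp_next f h| <= c.
Proof. by move=> fc; elim: n => // n IH; exact: exp_next_norm_le. Qed.

Lemma exp_next_potential phi (V : history SX SY -> R) :
  (forall h a b, V (rcons h (a, b)) = V h - mixed_payoff phi (sX h) b) ->
  forall h, exp_next V h = V h - stage_exp sX sY phi 0 h.
Proof.
move=> V_rcons h; rewrite exp_nextE stage_exp0E.
under eq_bigr => a _ do under eq_bigr => b _ do rewrite V_rcons.
under eq_bigr do rewrite mean_subr //.
exact: mean_const.
Qed.

Lemma potential_cesaro_cvg0 phi (V : history SX SY -> R) M :
  (forall h a b, V (rcons h (a, b)) = V h - mixed_payoff phi (sX h) b) ->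
  (forall h, `|V h| <= M) ->
  (fun T : nat => T.+1%:R^-1 * \sum_(t < T.+1) exp_stage sX sY phi t) @ \oo --> 0.
Proof.
move=> V_rcons VM; apply: (@cesaro_cvg0_bounded _ _ (M + M)) => T.
rewrite /exp_stage (sum_stage_exp_potential (exp_next_potential V_rcons)).
by rewrite (le_trans (ler_normB _ _)) // lerD // iter_exp_next_norm_le.
Qed.

Lemma stage_exp_le phi c :
  (forall h, stage_exp sX sY phi 0 h <= c) -> forall t h, stage_exp sX sY phi t h <= c.
Proof. by move=> c0; elim=> // t IH; exact: exp_next_le. Qed.

End Play.

Lemma autocraticN (R : realType) (SX SY : finType) sX (phi : SX -> SY -> R) lam :
  autocratic sX phi lam -> autocratic sX (fun a b => - phi a b) lam.
Proof.
move=> aut sY sY_beh; have [disc ces] := aut sY sY_beh.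
rewrite /exp_stage; split=> lam_cond.
  rewrite (eq_cvg _ _ (g := fun n => - \sum_(t < n) (1 - lam) * lam ^+ t *
    stage_exp sX sY phi t [::])); first by have := cvgN (disc lam_cond); rewrite oppr0; apply.
  by move=> n /=; rewrite -sumrN; apply: eq_bigr => t _; rewrite stage_expN mulrN.
rewrite (eq_cvg _ _ (g := fun T => - (T.+1%:R^-1 * \sum_(t < T.+1)
  stage_exp sX sY phi t [::]))); first by have := cvgN (ces lam_cond); rewrite oppr0; apply.
by move=> T /=; rewrite -mulrN -sumrN; congr (_ * _); apply: eq_bigr => t _; rewrite stage_expN.
Qed.

Lemma autocratic_nonneg_mixed (R : realType) (SX SY : finType)
    (sX : history SX SY -> SX -> R) (phi : SX -> SY -> R) (lam : R) :
  behavioral sX -> 0 <= lam <= 1 -> autocratic sX phi lam ->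
  exists2 tau, is_mixed tau & forall b, 0 <= mixed_payoff phi tau b.
Proof.
move=> sX_beh /andP[lam_ge0 lam_le1] aut.
apply: contrapT => no_tau.
have neg tau : is_mixed tau -> exists b, mixed_payoff phi tau b < 0.
  move=> mixed; apply: contrapT => /forallNP nonneg; apply: no_tau; exists tau => // b.
  by rewrite leNgt; apply/negP/nonneg.
have [c c_gt0 below] := mixed_payoff_uniformly_neg neg.
pose best_reply h := xchoose (below _ (sX_beh h)).
pose sY h b : R := (b == best_reply h)%:R.
have sY_beh : behavioral sY by move=> h; exact: is_mixed_dirac.
have stage_below t : exp_stage sX sY phi t <= - c.
  apply: (stage_exp_le sX_beh sY_beh) => h.
  by rewrite stage_exp0E sum_dirac; exact: (xchooseP (below _ (sX_beh h))).
have [disc ces] := aut sY sY_beh.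
move: lam_le1; rewrite le_eqVlt => /orP[/eqP lam1|lam_lt1].
  have := cesaro_lim_le stage_below (ces lam1).
  by rewrite oppr_ge0 leNgt c_gt0.
have lam01 : 0 <= lam < 1 by rewrite lam_ge0 lam_lt1.
have := discounted_sum_lim_le lam01 stage_below (ltW c_gt0) (disc lam_lt1).
by rewrite oppr_ge0 pmulr_rle0 ?subr_gt0 // leNgt c_gt0.
Qed.

Section Balancing.
Variables (R : realType) (SX SY : finType) (phi : SX -> SY -> R) (tp tm : SX -> R).

Definition balancing_action (v : R) := if 0 <= v then tp else tm.

Definition potential (h : history SX SY) : R :=
  foldl (fun v p => v - mixed_payoff phi (balancing_action v) p.2) 0 h.

Definition balancing (h : history SX SY) := balancing_action (potential h).

Lemma potential_rcons h p :
  potential (rcons h p) = potential h - mixed_payoff phi (balancing h) p.2.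
Proof. by rewrite /potential foldl_rcons. Qed.

Hypotheses (tp_mixed : is_mixed tp) (tm_mixed : is_mixed tm).

Lemma balancing_behavioral : behavioral balancing.
Proof. by move=> h; rewrite /balancing /balancing_action; case: ifP. Qed.

Hypotheses (tp_nonneg : forall b, 0 <= mixed_payoff phi tp b)
           (tm_nonpos : forall b, mixed_payoff phi tm b <= 0).

Lemma potential_bounded M : 0 <= M -> (forall a b, `|phi a b| <= M) ->
  forall h, `|potential h| <= M.
Proof.
move=> M_ge0 phiM; elim/last_ind => [|h p IH]; first by rewrite normr0.
have payoffM tau : is_mixed tau -> `|mixed_payoff phi tau p.2| <= M.
  by move=> mixed; apply: mean_norm_le.
move: IH; rewrite potential_rcons /balancing /balancing_action !ler_norml.
case: ifPn => [V_ge0|]; last rewrite -ltNge => V_lt0.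
  by have := payoffM _ tp_mixed; have := tp_nonneg p.2; rewrite ler_norml; lra.
by have := payoffM _ tm_mixed; have := tm_nonpos p.2; rewrite ler_norml; lra.
Qed.

Lemma balancing_cesaro_cvg0 sY : behavioral sY ->
  (fun T : nat => T.+1%:R^-1 * \sum_(t < T.+1) exp_stage balancing sY phi t) @ \oo --> 0.
Proof.
move=> sY_beh; pose M := \big[Order.max/0]_(p : SX * SY) `|phi p.1 p.2|.
have M_ge0 : 0 <= M by rewrite /M bigmax_idl le_max lexx.
have phiM a b : `|phi a b| <= M by exact: (le_bigmax _ (fun p => `|phi p.1 p.2|) (a, b)).
apply: (potential_cesaro_cvg0 balancing_behavioral sY_beh _ (potential_bounded M_ge0 phiM)).
by move=> h a b; rewrite potential_rcons.
Qed.

End Balancing.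

Theorem proposition13 (R : realType) (SX SY : finType)
  (uX uY : SX -> SY -> R)
  (hX : (0 < #|SX|)%N) (hY : (0 < #|SY|)%N) :
  (exists sX : history SX SY -> SX -> R, zero_sum_autocratic uX uY sX) <->
  (exists tp tm : SX -> R, is_mixed tp /\ is_mixed tm /\
     forall sY : SY,
       - mixed_payoff uY tp sY <= mixed_payoff uX tp sY /\
       mixed_payoff uX tm sY <= - mixed_payoff uY tm sY).
Proof.
pose phi a b := uX a b + uY a b.
split.
  move=> [sX [sX_beh [lam [lam01 aut]]]].
  have [tp tp_mixed tp_nonneg] := autocratic_nonneg_mixed sX_beh lam01 aut.
  have [tm tm_mixed tm_nonneg] := autocratic_nonneg_mixed sX_beh lam01 (autocraticN aut).
  exists tp, tm; split=> //; split=> // b.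
  by move: (tp_nonneg b) (tm_nonneg b); rewrite mixed_payoffN !mixed_payoffD; lra.
move=> [tp [tm [tp_mixed [tm_mixed tau_signs]]]].
have tp_nonneg b : 0 <= mixed_payoff phi tp b.
  by rewrite mixed_payoffD; have [+ _] := tau_signs b; lra.
have tm_nonpos b : mixed_payoff phi tm b <= 0.
  by rewrite mixed_payoffD; have [_ +] := tau_signs b; lra.
exists (balancing phi tp tm); split; first exact: balancing_behavioral.
exists 1; split=> [|sY sY_beh]; first by rewrite ler01 lexx.
split=> [|_]; first by rewrite ltxx.
exact: (balancing_cesaro_cvg0 tp_mixed tm_mixed tp_nonneg tm_nonpos sY_beh).
Qed.
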